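(* Let $n\ge2\times10^3$, let $m=(n-1)/2$ if $n$ is odd and $m=n/2-1$ if $n$ is even, with $0.247m,0.339m,0.414m$ integers, and let $T=\{f_1,\dots,f_k\}\subset[0,1)$ have wrap-around minimum separation at least $2.52/(n-1)$. Then there is a fixed numerical constant $C_{\bar v}$ (independent of $n$, $k$, $T$) such that $\|\bar v_\ell(f)\|_2\le C_{\bar v}$ for all $f\in[0,1]$ and all $\ell\in\{0,1,2,3\}$.
   Context: $\bar K=\mathcal{D}_{0.247m}\mathcal{D}_{0.339m}\mathcal{D}_{0.414m}$ with $\mathcal{D}_{\tilde m}(f)=\frac{1}{2\tilde m+1}\sum_{l=-\tilde m}^{\tilde m}e^{i2\pi lf}$; $\kappa=|\bar K''(0)|^{-1/2}$; $\bar K^{(\ell)}$ is the $\ell$-th derivative. $\bar v_\ell(f)=\kappa^\ell\big(\bar K^{(\ell)}(f-f_1),\dots,\bar K^{(\ell)}(f-f_k),\ \kappa\bar K^{(\ell+1)}(f-f_1),\dots,\kappa\bar K^{(\ell+1)}(f-f_k)\big)^T\in\mathbb{C}^{2k}$. *)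

From Stdlib Require Import Reals Lra Lia List.
Open Scope R_scope.

Definition cplx := (R * R)%type.
Definition cmul (z w : cplx) : cplx :=
  (fst z * fst w - snd z * snd w, fst z * snd w + snd z * fst w).
Definition cscale (a : R) (z : cplx) : cplx := (a * fst z, a * snd z).
Definition cabs2 (z : cplx) : R := fst z ^ 2 + snd z ^ 2.
Definition cabs (z : cplx) : R := sqrt (cabs2 z).

(* Dirichlet kernel D_mt(f) = 1/(2mt+1) sum_{l=-mt}^{mt} e^{i 2 pi l f},
   written via Euler's formula e^{ix} = cos x + i sin x;
   the sum over l = -mt..mt is reindexed as i = 0..2mt with l = i - mt. *)
Definition Dir (mt : nat) (f : R) : cplx :=
  ( / (2 * INR mt + 1) *
      sum_f_R0 (fun i => cos (2 * PI * (INR i - INR mt) * f)) (2 * mt),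
    / (2 * INR mt + 1) *
      sum_f_R0 (fun i => sin (2 * PI * (INR i - INR mt) * f)) (2 * mt)).

Definition Kbar (m1 m2 m3 : nat) (f : R) : cplx :=
  cmul (Dir m1 f) (cmul (Dir m2 f) (Dir m3 f)).

Definition IsDerivSeq (K : R -> cplx) (Kd : nat -> R -> cplx) : Prop :=
  (forall f, Kd 0%nat f = K f) /\
  (forall (j : nat) (f : R),
     derivable_pt_lim (fun x => fst (Kd j x)) f (fst (Kd (S j) f)) /\
     derivable_pt_lim (fun x => snd (Kd j x)) f (snd (Kd (S j) f))).

Definition mOf (n : nat) : nat :=
  if Nat.odd n then ((n - 1) / 2)%nat else (n / 2 - 1)%nat.

Definition wdist (x y : R) : R := Rmin (Rabs (x - y)) (1 - Rabs (x - y)).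

Definition kappa (Kd : nat -> R -> cplx) : R := / sqrt (cabs (Kd 2%nat 0)).

Definition vbar1 (Kd : nat -> R -> cplx) (l : nat) (T : list R) (f : R) : list cplx :=
  map (fun fj => cscale (kappa Kd ^ l) (Kd l (f - fj))) T.
Definition vbar2 (Kd : nat -> R -> cplx) (l : nat) (T : list R) (f : R) : list cplx :=
  map (fun fj => cscale (kappa Kd ^ l * kappa Kd) (Kd (S l) (f - fj))) T.
Definition vbar (Kd : nat -> R -> cplx) (l : nat) (T : list R) (f : R) : list cplx :=
  vbar1 Kd l T f ++ vbar2 Kd l T f.

Definition cnorm2 (v : list cplx) : R :=
  sqrt (fold_right (fun z acc => cabs2 z + acc) 0 v).

(* Every entry of [vbar] is [kappa^j Kbar^(j) (f - fj)] with [j <= 4].  Summing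
   by parts against [e^(i pi (2l +- 1) x)] shows that the [j]-th derivative of a
   Dirichlet kernel of width [mt] is at most [C mt^j / (1 + mt |sin (pi x)|)];
   since the three widths are comparable to [m], the Leibniz rule gives
   [|Kbar^(j)(x)| <= C m^j / (1 + m |sin (pi x)|)^3].  At the origin
   [Kbar''(0)] is minus the sum of the curvatures [4 pi^2 mt (mt + 1) / 3],
   so [kappa m] is bounded and [kappa^j |Kbar^(j)(x)| <= C / (1 + m |sin (pi x)|)].
   Finally [|sin (pi x)| >= |x|] on [[-1/2, 1/2]], and points separated by
   [2.52 / (n - 1) >= 1 / m] on the circle contribute at most
   [2 sum_k 1 / (1 + k)^2 <= 4] to [sum_j 1 / (1 + m |f - fj|)^2]. *)

From Stdlib Require Import Reals Lra Lia List Permutation FunctionalExtensionality.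
From Coquelicot Require Import Coquelicot.
Open Scope R_scope.

(** * Derivatives of the kernel *)

Lemma derivable_pt_lim_sum_f_R0 (g : nat -> R -> R) (dg : nat -> R) n x :
  (forall i, (i <= n)%nat -> derivable_pt_lim (g i) x (dg i)) ->
  derivable_pt_lim (fun y => sum_f_R0 (fun i => g i y) n) x (sum_f_R0 dg n).
Proof.
  induction n as [|n IH]; intros Hg; simpl.
  - apply Hg; lia.
  - apply derivable_pt_lim_plus; [apply IH; intros i Hi|]; apply Hg; lia.
Qed.

Lemma derivable_pt_lim_cos_affine c w p x :
  derivable_pt_lim (fun y => c * cos (w * y + p)) x (c * w * cos (w * x + p + PI / 2)).
Proof.
  apply is_derive_Reals. auto_derive; auto.
  rewrite cos_plus, cos_PI2, sin_PI2. ring.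
Qed.

Lemma derivable_pt_lim_sin_affine c w p x :
  derivable_pt_lim (fun y => c * sin (w * y + p)) x (c * w * sin (w * x + p + PI / 2)).
Proof.
  apply is_derive_Reals. auto_derive; auto.
  rewrite sin_plus, cos_PI2, sin_PI2. ring.
Qed.

Definition freq (mt i : nat) : R := 2 * PI * (INR i - INR mt).

(* Differentiating [cos (w x + p)] multiplies by [w] and shifts the phase by [PI/2]. *)
Definition Dir_deriv (mt a : nat) (x : R) : cplx :=
  ( / (2 * INR mt + 1) *
      sum_f_R0 (fun i => freq mt i ^ a * cos (freq mt i * x + INR a * (PI / 2))) (2 * mt),
    / (2 * INR mt + 1) *
      sum_f_R0 (fun i => freq mt i ^ a * sin (freq mt i * x + INR a * (PI / 2))) (2 * mt)).

Lemma Dir_derivSeq mt : IsDerivSeq (Dir mt) (Dir_deriv mt).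
Proof.
  split.
  - intro x. unfold Dir_deriv, Dir, freq.
    f_equal; f_equal; apply sum_eq; intros i _; simpl;
      rewrite Rmult_0_l, Rplus_0_r, Rmult_1_l; reflexivity.
  - intros j x.
    assert (Hphase : forall i, freq mt i * x + INR (S j) * (PI / 2)
                              = freq mt i * x + INR j * (PI / 2) + PI / 2)
      by (intro; rewrite S_INR; ring).
    split; cbn [fst snd Dir_deriv]; apply derivable_pt_lim_scal;
      apply derivable_pt_lim_sum_f_R0; intros i _; rewrite Hphase;
      eapply (eq_rect _ (derivable_pt_lim _ _));
      [apply derivable_pt_lim_cos_affine | simpl; ring
      |apply derivable_pt_lim_sin_affine | simpl; ring].
Qed.

Definition cadd (z w : cplx) : cplx := (fst z + fst w, snd z + snd w).

(* The Leibniz rule without binomial coefficients: the [j]-th derivative of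
   [F G] is the sum of [F^(p) G^(q)] over the [2^j] words [(p, q)] obtained by
   [j] successive choices of which factor to differentiate. *)
Definition leibniz_step (pq : nat * nat) : list (nat * nat) :=
  (S (fst pq), snd pq) :: (fst pq, S (snd pq)) :: nil.

Fixpoint leibniz_pairs (j : nat) : list (nat * nat) :=
  match j with
  | O => (O, O) :: nil
  | S j => flat_map leibniz_step (leibniz_pairs j)
  end.

Definition pair_sum (F G : nat -> R -> cplx) (L : list (nat * nat)) (x : R) : cplx :=
  fold_right (fun pq acc => cadd (cmul (F (fst pq) x) (G (snd pq) x)) acc) (0, 0) L.

Definition prod_deriv (F G : nat -> R -> cplx) (j : nat) : R -> cplx :=
  pair_sum F G (leibniz_pairs j).

Lemma pair_sum_deriv K1 K2 F G : IsDerivSeq K1 F -> IsDerivSeq K2 G ->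
  forall L x,
  derivable_pt_lim (fun y => fst (pair_sum F G L y)) x
    (fst (pair_sum F G (flat_map leibniz_step L) x)) /\
  derivable_pt_lim (fun y => snd (pair_sum F G L y)) x
    (snd (pair_sum F G (flat_map leibniz_step L) x)).
Proof.
  intros [_ HF] [_ HG] L x. induction L as [|[p q] L [IH1 IH2]].
  - split; apply derivable_pt_lim_const.
  - destruct (HF p x) as [F1 F2], (HG q x) as [G1 G2].
    split; simpl; eapply (eq_rect _ (derivable_pt_lim _ _)).
    + apply derivable_pt_lim_plus; [|exact IH1].
      apply derivable_pt_lim_minus; apply derivable_pt_lim_mult; eassumption.
    + simpl. ring.
    + apply derivable_pt_lim_plus; [|exact IH2].
      apply derivable_pt_lim_plus; apply derivable_pt_lim_mult; eassumption.
    + simpl. ring.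
Qed.

Lemma prod_derivSeq K1 K2 F G : IsDerivSeq K1 F -> IsDerivSeq K2 G ->
  IsDerivSeq (fun x => cmul (K1 x) (K2 x)) (prod_deriv F G).
Proof.
  intros H1 H2. split.
  - intro x. destruct H1 as [E1 _], H2 as [E2 _].
    unfold prod_deriv, pair_sum, cadd, cmul; simpl. rewrite E1, E2, !Rplus_0_r.
    reflexivity.
  - intros j x. exact (pair_sum_deriv K1 K2 F G H1 H2 (leibniz_pairs j) x).
Qed.

Lemma IsDerivSeq_unique K Kd Kd' : IsDerivSeq K Kd -> IsDerivSeq K Kd' ->
  forall j x, Kd j x = Kd' j x.
Proof.
  intros [A1 B1] [A2 B2] j. induction j as [|j IH]; intro x.
  - rewrite A1, A2; reflexivity.
  - assert (E : Kd j = Kd' j) by (apply functional_extensionality; exact IH).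
    destruct (B1 j x) as [P1 P2], (B2 j x) as [Q1 Q2]. rewrite E in P1, P2.
    rewrite (surjective_pairing (Kd (S j) x)), (surjective_pairing (Kd' (S j) x)).
    f_equal; eapply uniqueness_limite; eauto.
Qed.

Definition Kbar_deriv (m1 m2 m3 : nat) : nat -> R -> cplx :=
  prod_deriv (Dir_deriv m1) (prod_deriv (Dir_deriv m2) (Dir_deriv m3)).

Lemma Kbar_derivSeq m1 m2 m3 : IsDerivSeq (Kbar m1 m2 m3) (Kbar_deriv m1 m2 m3).
Proof.
  apply (prod_derivSeq (Dir m1) (fun x => cmul (Dir m2 x) (Dir m3 x)));
    [|apply prod_derivSeq]; apply Dir_derivSeq.
Qed.

(** * Decay of the derivatives of a Dirichlet kernel *)

Lemma Rabs_pow_sub_le a x y M : Rabs x <= M -> Rabs y <= M ->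
  Rabs (x ^ a - y ^ a) * M <= INR a * M ^ a * Rabs (x - y).
Proof.
  intros Hx Hy. assert (HM : 0 <= M) by (pose proof (Rabs_pos x); lra).
  induction a as [|a IH].
  - simpl. rewrite Rminus_diag, Rabs_R0. lra.
  - replace (x ^ S a - y ^ S a) with (x * (x ^ a - y ^ a) + (x - y) * y ^ a) by (simpl; ring).
    rewrite S_INR.
    eapply Rle_trans; [apply Rmult_le_compat_r; [exact HM | apply Rabs_triang]|].
    rewrite !Rabs_mult, <- RPow_abs.
    assert (Hya : Rabs y ^ a <= M ^ a) by (apply pow_incr; split; [apply Rabs_pos | auto]).
    pose proof (Rabs_pos x). pose proof (Rabs_pos (x - y)).
    pose proof (Rabs_pos (x ^ a - y ^ a)). pose proof (pow_le _ a (Rabs_pos y)).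
    assert (Rabs x * Rabs (x ^ a - y ^ a) * M <= M * (INR a * M ^ a * Rabs (x - y)))
      by (rewrite Rmult_assoc; apply Rmult_le_compat; nra).
    assert (Rabs (x - y) * Rabs y ^ a * M <= Rabs (x - y) * M ^ a * M)
      by (apply Rmult_le_compat_r; auto; apply Rmult_le_compat_l; auto).
    simpl. nra.
Qed.

Lemma sum_by_parts (c E : nat -> R) N :
  sum_f_R0 (fun i => c i * (E (S i) - E i)) N
  = c (S N) * E (S N) - c 0%nat * E 0%nat
    - sum_f_R0 (fun i => (c (S i) - c i) * E (S i)) N.
Proof. induction N as [|N IH]; simpl; [|rewrite IH]; ring. Qed.

(* Abel summation: if [v] is a discrete derivative [(E (i+1) - E i) / (2 s)] of a
   bounded [E], a sum weighted by [v] costs only the total variation of [c]. *)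
Lemma Rabs_sum_by_parts_le (c E v : nat -> R) s N :
  (forall i, (i <= N)%nat -> 2 * s * v i = E (S i) - E i) ->
  (forall i, Rabs (E i) <= 1) ->
  Rabs (2 * s * sum_f_R0 (fun i => c i * v i) N) <=
    Rabs (c 0%nat) + Rabs (c (S N)) + sum_f_R0 (fun i => Rabs (c (S i) - c i)) N.
Proof.
  intros Hv HE.
  rewrite scal_sum, (sum_eq _ (fun i => c i * (E (S i) - E i)))
    by (intros i Hi; rewrite <- Hv by auto; ring).
  rewrite sum_by_parts.
  assert (Hvar : Rabs (sum_f_R0 (fun i => (c (S i) - c i) * E (S i)) N)
                 <= sum_f_R0 (fun i => Rabs (c (S i) - c i)) N).
  { eapply Rle_trans; [apply sum_f_R0_triangle|]. apply sum_Rle. intros i _.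
    rewrite Rabs_mult. pose proof (HE (S i)). pose proof (Rabs_pos (c (S i) - c i)).
    pose proof (Rabs_pos (E (S i))). nra. }
  assert (Hend : Rabs (c (S N) * E (S N) - c 0%nat * E 0%nat)
                 <= Rabs (c 0%nat) + Rabs (c (S N))).
  { unfold Rminus. eapply Rle_trans; [apply Rabs_triang|]. rewrite Rabs_Ropp, !Rabs_mult.
    pose proof (HE (S N)). pose proof (HE 0%nat).
    pose proof (Rabs_pos (c (S N))). pose proof (Rabs_pos (c 0%nat)).
    pose proof (Rabs_pos (E (S N))). pose proof (Rabs_pos (E 0%nat)). nra. }
  unfold Rminus at 1. eapply Rle_trans; [apply Rabs_triang|]. rewrite Rabs_Ropp. lra.
Qed.

Lemma freq_S mt i : freq mt (S i) = freq mt i + 2 * PI.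
Proof. unfold freq. rewrite S_INR. ring. Qed.

Lemma Rabs_freq_le mt i : (i <= 2 * mt + 1)%nat ->
  Rabs (freq mt i) <= 2 * PI * (INR mt + 1).
Proof.
  intros Hi. unfold freq. pose proof PI_RGT_0.
  rewrite Rabs_mult, (Rabs_right (2 * PI)) by lra.
  apply Rmult_le_compat_l; [lra|].
  apply le_INR in Hi. rewrite plus_INR, mult_INR in Hi. simpl in Hi.
  pose proof (pos_INR i). apply Rabs_le. lra.
Qed.

Lemma Rabs_freq_pow_le mt a i : (i <= 2 * mt + 1)%nat ->
  Rabs (freq mt i ^ a) <= (2 * PI * (INR mt + 1)) ^ a.
Proof.
  intros Hi. rewrite <- RPow_abs. apply pow_incr.
  split; [apply Rabs_pos | apply Rabs_freq_le; exact Hi].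
Qed.

Lemma freq_pow_variation_le mt a :
  sum_f_R0 (fun i => Rabs (freq mt (S i) ^ a - freq mt i ^ a)) (2 * mt)
  <= 2 * INR a * (2 * PI * (INR mt + 1)) ^ a.
Proof.
  set (Mt := 2 * PI * (INR mt + 1)).
  pose proof PI_RGT_0. pose proof (pos_INR mt). pose proof (pos_INR a).
  assert (HMt : 0 < Mt) by (unfold Mt; nra).
  assert (HMa : 0 <= Mt ^ a) by (apply pow_le; lra).
  eapply Rle_trans.
  - apply sum_Rle with (Bn := fun _ => INR a * Mt ^ a / (INR mt + 1)).
    intros i Hi.
    pose proof (Rabs_pow_sub_le a _ _ Mt (Rabs_freq_le mt (S i) ltac:(lia))
                  (Rabs_freq_le mt i ltac:(lia))) as P.
    rewrite freq_S in P |- *.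
    replace (freq mt i + 2 * PI - freq mt i) with (2 * PI) in P by ring.
    rewrite (Rabs_right (2 * PI)) in P by lra.
    apply Rmult_le_reg_r with Mt; [exact HMt|].
    unfold Mt at 3. field_simplify; [|lra].
    replace (2 * INR a * Mt ^ a * PI) with (INR a * Mt ^ a * (2 * PI)) by ring. exact P.
  - rewrite sum_cte, S_INR, mult_INR. simpl.
    replace (INR a * Mt ^ a / (INR mt + 1) * (2 * INR mt + 1))
      with (INR a * Mt ^ a * ((2 * INR mt + 1) / (INR mt + 1))) by (field; lra).
    assert ((2 * INR mt + 1) / (INR mt + 1) <= 2).
    { apply Rmult_le_reg_r with (INR mt + 1); [lra|]. field_simplify; lra. }
    assert (0 <= INR a * Mt ^ a) by nra. nra.
Qed.

Lemma Rabs_sum_freq_pow_le mt a (v : nat -> R) : (forall i, Rabs (v i) <= 1) ->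
  Rabs (sum_f_R0 (fun i => freq mt i ^ a * v i) (2 * mt))
  <= (2 * PI * (INR mt + 1)) ^ a * (2 * INR mt + 1).
Proof.
  intros Hv. eapply Rle_trans; [apply sum_f_R0_triangle|].
  eapply Rle_trans.
  - apply sum_Rle with (Bn := fun _ => (2 * PI * (INR mt + 1)) ^ a).
    intros i Hi. rewrite Rabs_mult.
    pose proof (Hv i). pose proof (Rabs_pos (v i)).
    pose proof (Rabs_freq_pow_le mt a i ltac:(lia)). pose proof (Rabs_pos (freq mt i ^ a)).
    nra.
  - rewrite sum_cte, S_INR, mult_INR. simpl. lra.
Qed.

Lemma Rabs_sin_sum_freq_pow_le mt a x (v E : nat -> R) :
  (forall i, (i <= 2 * mt)%nat -> 2 * sin (PI * x) * v i = E (S i) - E i) ->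
  (forall i, Rabs (E i) <= 1) ->
  Rabs (2 * sin (PI * x) * sum_f_R0 (fun i => freq mt i ^ a * v i) (2 * mt))
  <= (2 + 2 * INR a) * (2 * PI * (INR mt + 1)) ^ a.
Proof.
  intros Hv HE.
  eapply Rle_trans; [apply (Rabs_sum_by_parts_le (fun i => freq mt i ^ a) E v); auto|].
  pose proof (freq_pow_variation_le mt a).
  pose proof (Rabs_freq_pow_le mt a 0 ltac:(lia)).
  pose proof (Rabs_freq_pow_le mt a (S (2 * mt)) ltac:(lia)).
  lra.
Qed.

Definition cnorm1 (z : cplx) : R := Rabs (fst z) + Rabs (snd z).

Lemma cnorm1_ge0 z : 0 <= cnorm1 z.
Proof. unfold cnorm1. pose proof (Rabs_pos (fst z)). pose proof (Rabs_pos (snd z)). lra. Qed.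

Lemma cnorm1_cmul z w : cnorm1 (cmul z w) <= cnorm1 z * cnorm1 w.
Proof.
  destruct z as [a b], w as [c d]. unfold cnorm1, cmul, Rminus; simpl.
  eapply Rle_trans; [apply Rplus_le_compat; apply Rabs_triang|].
  rewrite Rabs_Ropp, !Rabs_mult.
  pose proof (Rabs_pos a). pose proof (Rabs_pos b).
  pose proof (Rabs_pos c). pose proof (Rabs_pos d). nra.
Qed.

Lemma Dir_component_decay mt a x (v E : nat -> R) :
  (forall i, (i <= 2 * mt)%nat -> 2 * sin (PI * x) * v i = E (S i) - E i) ->
  (forall i, Rabs (E i) <= 1) -> (forall i, Rabs (v i) <= 1) ->
  Rabs (/ (2 * INR mt + 1) * sum_f_R0 (fun i => freq mt i ^ a * v i) (2 * mt))
    * (1 + INR mt * Rabs (sin (PI * x)))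
  <= (2 + INR a) * (2 * PI * (INR mt + 1)) ^ a.
Proof.
  intros Hv HE Hv1.
  pose proof (Rabs_sum_freq_pow_le mt a v Hv1) as Hq.
  pose proof (Rabs_sin_sum_freq_pow_le mt a x v E Hv HE) as Hsq.
  rewrite !Rabs_mult, (Rabs_right 2) in Hsq by lra.
  pose proof (Rabs_pos (sum_f_R0 (fun i => freq mt i ^ a * v i) (2 * mt))) as Hq0.
  pose proof (Rabs_pos (sin (PI * x))) as Hs0.
  pose proof (pos_INR mt) as Hmt.
  set (Mta := (2 * PI * (INR mt + 1)) ^ a) in *.
  set (q := Rabs (sum_f_R0 (fun i => freq mt i ^ a * v i) (2 * mt))) in *.
  set (s := Rabs (sin (PI * x))) in *.
  rewrite Rabs_mult, Rabs_inv, (Rabs_right (2 * INR mt + 1)) by lra. fold q.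
  assert (HN : 0 < 2 * INR mt + 1) by lra.
  assert (E1 : / (2 * INR mt + 1) * q <= Mta).
  { apply Rmult_le_reg_l with (2 * INR mt + 1); auto. field_simplify; lra. }
  assert (E2 : 0 <= INR mt * / (2 * INR mt + 1) <= 1).
  { split; [apply Rmult_le_pos; [lra | apply Rlt_le, Rinv_0_lt_compat; lra]|].
    apply Rmult_le_reg_l with (2 * INR mt + 1); auto. field_simplify; lra. }
  assert (E3 : 0 <= s * q <= (1 + INR a) * Mta) by nra.
  replace (/ (2 * INR mt + 1) * q * (1 + INR mt * s))
    with (/ (2 * INR mt + 1) * q + (INR mt * / (2 * INR mt + 1)) * (s * q)) by ring.
  nra.
Qed.

Lemma Dir_deriv_decay mt a x :
  cnorm1 (Dir_deriv mt a x) * (1 + INR mt * Rabs (sin (PI * x)))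
  <= 2 * (2 + INR a) * (2 * PI * (INR mt + 1)) ^ a.
Proof.
  unfold cnorm1, Dir_deriv. cbn [fst snd].
  set (ph := INR a * (PI / 2)).
  assert (Hshift : forall i, freq mt (S i) * x - PI * x + ph = (freq mt i * x + ph) + PI * x
                            /\ freq mt i * x - PI * x + ph = (freq mt i * x + ph) - PI * x)
    by (intro; rewrite freq_S; split; ring).
  rewrite Rmult_plus_distr_r.
  replace (2 * (2 + INR a) * (2 * PI * (INR mt + 1)) ^ a)
    with ((2 + INR a) * (2 * PI * (INR mt + 1)) ^ a + (2 + INR a) * (2 * PI * (INR mt + 1)) ^ a)
    by ring.
  apply Rplus_le_compat.
  - apply (Dir_component_decay mt a x (fun i => cos (freq mt i * x + ph))
             (fun i => sin (freq mt i * x - PI * x + ph))).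
    + intros i _. destruct (Hshift i) as [-> ->]. rewrite sin_plus, sin_minus. ring.
    + intro. apply Rabs_le, SIN_bound.
    + intro. apply Rabs_le, COS_bound.
  - apply (Dir_component_decay mt a x (fun i => sin (freq mt i * x + ph))
             (fun i => - cos (freq mt i * x - PI * x + ph))).
    + intros i _. destruct (Hshift i) as [-> ->]. rewrite cos_plus, cos_minus. ring.
    + intro. rewrite Rabs_Ropp. apply Rabs_le, COS_bound.
    + intro. apply Rabs_le, SIN_bound.
Qed.

Definition decay (m : nat) (x : R) : R := / (1 + INR m * Rabs (sin (PI * x))).

Lemma decay_pos m x : 0 < decay m x.
Proof.
  unfold decay. apply Rinv_0_lt_compat.
  pose proof (pos_INR m). pose proof (Rabs_pos (sin (PI * x))). nra.
Qed.

Lemma decay_le1 m x : decay m x <= 1.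
Proof.
  unfold decay. pose proof (pos_INR m). pose proof (Rabs_pos (sin (PI * x))).
  rewrite <- Rinv_1. apply Rinv_le_contravar; nra.
Qed.

Lemma Dir_deriv_le_decay mt m a x : INR m <= 5 * INR mt -> INR mt <= INR m -> (a <= 4)%nat ->
  cnorm1 (Dir_deriv mt a x) <= 60 * (2 * PI * (INR m + 1)) ^ a * decay m x.
Proof.
  intros Hlo Hhi Ha. pose proof (Dir_deriv_decay mt a x) as B.
  pose proof PI_RGT_0. pose proof (pos_INR mt). pose proof (Rabs_pos (sin (PI * x))).
  assert (Ha' : INR a <= 4) by (apply le_INR in Ha; simpl in Ha; lra).
  set (s := Rabs (sin (PI * x))) in *. unfold decay. fold s.
  set (Ma := (2 * PI * (INR m + 1)) ^ a).
  assert (HMa : (2 * PI * (INR mt + 1)) ^ a <= Ma) by (apply pow_incr; split; nra).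
  assert (0 <= (2 * PI * (INR mt + 1)) ^ a) by (apply pow_le; nra).
  assert (Hd : 0 < 1 + INR mt * s) by nra.
  assert (Hd' : 0 < 1 + INR m * s) by nra.
  assert (Hdecay : cnorm1 (Dir_deriv mt a x) <= 12 * Ma / (1 + INR mt * s)).
  { apply Rmult_le_reg_r with (1 + INR mt * s); auto.
    unfold Rdiv. rewrite Rmult_assoc, Rinv_l by lra. nra. }
  eapply Rle_trans; [exact Hdecay|].
  replace (60 * Ma * / (1 + INR m * s)) with (12 * Ma * (5 / (1 + INR m * s))) by (field; lra).
  unfold Rdiv. apply Rmult_le_compat_l; [nra|].
  apply Rmult_le_reg_r with ((1 + INR mt * s) * (1 + INR m * s)); [nra|].
  field_simplify; nra.
Qed.

Lemma leibniz_pairs_sum j pq : In pq (leibniz_pairs j) -> (fst pq + snd pq = j)%nat.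
Proof.
  revert pq; induction j as [|j IH]; simpl; intros pq H.
  - destruct H as [<-|[]]; reflexivity.
  - apply in_flat_map in H. destruct H as [[p q] [H1 H2]].
    apply IH in H1. simpl in H1.
    destruct H2 as [<-|[<-|[]]]; simpl; lia.
Qed.

Lemma length_leibniz_pairs j : length (leibniz_pairs j) = (2 ^ j)%nat.
Proof.
  assert (Hstep : forall L, length (flat_map leibniz_step L) = (2 * length L)%nat)
    by (induction L; simpl; lia).
  induction j as [|j IH]; simpl; [reflexivity|]. rewrite Hstep, IH. lia.
Qed.

Lemma cnorm1_cadd z w : cnorm1 (cadd z w) <= cnorm1 z + cnorm1 w.
Proof.
  unfold cnorm1, cadd; cbn [fst snd].
  pose proof (Rabs_triang (fst z) (fst w)). pose proof (Rabs_triang (snd z) (snd w)). lra.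
Qed.

Lemma cnorm1_pair_sum_le F G L x B :
  (forall pq, In pq L -> cnorm1 (cmul (F (fst pq) x) (G (snd pq) x)) <= B) ->
  cnorm1 (pair_sum F G L x) <= INR (length L) * B.
Proof.
  induction L as [|pq L IH]; intro H.
  - unfold cnorm1; simpl. rewrite Rabs_R0. lra.
  - simpl length. rewrite S_INR.
    change (pair_sum F G (pq :: L) x)
      with (cadd (cmul (F (fst pq) x) (G (snd pq) x)) (pair_sum F G L x)).
    eapply Rle_trans; [apply cnorm1_cadd|].
    pose proof (H pq (or_introl eq_refl)).
    pose proof (IH (fun pq' Hin => H pq' (or_intror Hin))).
    lra.
Qed.

(* The [2^j <= 2^J] Leibniz terms each obey the product bound, because [p + q = j]. *)
Lemma cnorm1_prod_deriv_le F G x J M aF aG rF rG :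
  0 <= M -> 0 <= aF -> 0 <= aG -> 0 <= rF -> 0 <= rG ->
  (forall p, (p <= J)%nat -> cnorm1 (F p x) <= aF * M ^ p * rF) ->
  (forall q, (q <= J)%nat -> cnorm1 (G q x) <= aG * M ^ q * rG) ->
  forall j, (j <= J)%nat ->
  cnorm1 (prod_deriv F G j x) <= (2 ^ J * aF * aG) * M ^ j * (rF * rG).
Proof.
  intros HM HaF HaG HrF HrG HF HG j Hj. unfold prod_deriv.
  assert (HB : 0 <= aF * aG * M ^ j * (rF * rG)).
  { apply Rmult_le_pos; [|nra]. apply Rmult_le_pos; [nra | apply pow_le; auto]. }
  eapply Rle_trans.
  - apply cnorm1_pair_sum_le with (B := aF * aG * M ^ j * (rF * rG)).
    intros [p q] Hin. pose proof (leibniz_pairs_sum j _ Hin) as Hs; simpl in Hs |- *.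
    eapply Rle_trans; [apply cnorm1_cmul|].
    pose proof (cnorm1_ge0 (F p x)). pose proof (cnorm1_ge0 (G q x)).
    replace (aF * aG * M ^ j * (rF * rG)) with ((aF * M ^ p * rF) * (aG * M ^ q * rG))
      by (rewrite <- Hs, pow_add; ring).
    apply Rmult_le_compat; auto; [apply HF | apply HG]; lia.
  - rewrite length_leibniz_pairs, pow_INR.
    replace (2 ^ J * aF * aG * M ^ j * (rF * rG)) with (2 ^ J * (aF * aG * M ^ j * (rF * rG))) by ring.
    apply Rmult_le_compat_r; [exact HB|]. simpl INR.
    apply Rle_pow; [lra | exact Hj].
Qed.

Definition C_Kbar : R := 2 ^ 4 * 60 * (2 ^ 4 * 60 * 60).

Lemma Kbar_deriv_le m m1 m2 m3 j x :
  INR m <= 5 * INR m1 -> INR m1 <= INR m ->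
  INR m <= 5 * INR m2 -> INR m2 <= INR m ->
  INR m <= 5 * INR m3 -> INR m3 <= INR m -> (j <= 4)%nat ->
  cnorm1 (Kbar_deriv m1 m2 m3 j x)
  <= C_Kbar * (2 * PI * (INR m + 1)) ^ j * decay m x ^ 3.
Proof.
  intros. pose proof PI_RGT_0. pose proof (pos_INR m). pose proof (decay_pos m x).
  replace (decay m x ^ 3) with (decay m x * (decay m x * decay m x)) by ring.
  unfold C_Kbar. apply cnorm1_prod_deriv_le; auto; try lra; try nra.
  - intros; apply Dir_deriv_le_decay; auto.
  - intros q Hq. apply cnorm1_prod_deriv_le; auto; try lra; try nra;
      intros; apply Dir_deriv_le_decay; auto.
Qed.

Lemma sum_shifted_id N c :
  sum_f_R0 (fun i => INR i - c) N = INR N * (INR N + 1) / 2 - (INR N + 1) * c.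
Proof. induction N as [|N IH]; [simpl; field|]. rewrite tech5, IH, S_INR. field. Qed.

Lemma sum_shifted_sq N c :
  sum_f_R0 (fun i => (INR i - c) ^ 2) N =
  INR N * (INR N + 1) * (2 * INR N + 1) / 6 - c * INR N * (INR N + 1) + (INR N + 1) * c ^ 2.
Proof. induction N as [|N IH]; [simpl; field|]. rewrite tech5, IH, S_INR. field. Qed.

Definition Dir_curv (mt : nat) : R := 4 * PI ^ 2 * INR mt * (INR mt + 1) / 3.

Lemma Dir_curv_ge0 mt : 0 <= Dir_curv mt.
Proof.
  unfold Dir_curv. pose proof (pos_INR mt). pose proof PI_RGT_0.
  apply Rmult_le_pos; [|lra]. apply Rmult_le_pos; [|lra]. apply Rmult_le_pos; [|lra]. nra.
Qed.

Lemma Dir_deriv_at0 mt :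
  Dir_deriv mt 0 0 = (1, 0) /\ Dir_deriv mt 1 0 = (0, 0) /\
  Dir_deriv mt 2 0 = (- Dir_curv mt, 0).
Proof.
  pose proof (pos_INR mt).
  unfold Dir_deriv. split; [|split]; f_equal.
  - rewrite (sum_eq _ (fun _ => 1)), sum_cte, S_INR, mult_INR; [simpl; field; lra|].
    intros i _. simpl. rewrite Rmult_0_r, Rmult_0_l, Rplus_0_r, cos_0. ring.
  - rewrite (sum_eq _ (fun _ => 0)), sum_cte; [ring|].
    intros i _. simpl. rewrite Rmult_0_r, Rmult_0_l, Rplus_0_r, sin_0. ring.
  - rewrite (sum_eq _ (fun _ => 0)), sum_cte; [ring|].
    intros i _. simpl. rewrite Rmult_0_r, Rmult_1_l, Rplus_0_l, cos_PI2. ring.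
  - rewrite (sum_eq _ (fun i => (INR i - INR mt) * (2 * PI))).
    + rewrite <- scal_sum, sum_shifted_id, mult_INR. simpl. field. lra.
    + intros i _. simpl. rewrite Rmult_0_r, Rmult_1_l, Rplus_0_l, sin_PI2. unfold freq. ring.
  - rewrite (sum_eq _ (fun i => (INR i - INR mt) ^ 2 * (- (4 * PI ^ 2)))).
    + rewrite <- scal_sum, sum_shifted_sq, mult_INR. unfold Dir_curv. simpl. field. lra.
    + intros i _. replace (freq mt i * 0 + INR 2 * (PI / 2)) with PI by (simpl; field).
      rewrite cos_PI. unfold freq. ring.
  - rewrite (sum_eq _ (fun _ => 0)), sum_cte; [ring|].
    intros i _. replace (freq mt i * 0 + INR 2 * (PI / 2)) with PI by (simpl; field).
    rewrite sin_PI. ring.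
Qed.

Lemma Kbar_deriv2_at0 m1 m2 m3 :
  Kbar_deriv m1 m2 m3 2 0 = (- (Dir_curv m1 + (Dir_curv m2 + Dir_curv m3)), 0).
Proof.
  destruct (Dir_deriv_at0 m1) as [A0 [A1 A2]].
  destruct (Dir_deriv_at0 m2) as [B0 [B1 B2]].
  destruct (Dir_deriv_at0 m3) as [C0 [C1 C2]].
  unfold Kbar_deriv, prod_deriv, pair_sum.
  cbn [leibniz_pairs flat_map leibniz_step app fold_right fst snd].
  rewrite A0, A1, A2, B0, B1, B2, C0, C1, C2.
  unfold cmul, cadd. cbn [fst snd]. f_equal; ring.
Qed.

(* [kappa] is of order [1 / m] because the curvature of [D_{m1}] alone is of order [m^2]. *)
Lemma kappa_scale_le m m1 m2 m3 Kd : IsDerivSeq (Kbar m1 m2 m3) Kd ->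
  999 <= INR m -> INR m1 = 247 / 1000 * INR m ->
  0 <= kappa Kd /\ kappa Kd * (2 * PI * (INR m + 1)) <= 9.
Proof.
  intros HK Hm H1.
  unfold kappa. rewrite (IsDerivSeq_unique _ _ _ HK (Kbar_derivSeq m1 m2 m3)), Kbar_deriv2_at0.
  set (S0 := Dir_curv m1 + (Dir_curv m2 + Dir_curv m3)).
  pose proof (Dir_curv_ge0 m1). pose proof (Dir_curv_ge0 m2). pose proof (Dir_curv_ge0 m3).
  pose proof PI_RGT_0.
  assert (Hc1 : 81 * Dir_curv m1 >= (2 * PI * (INR m + 1)) ^ 2).
  { unfold Dir_curv. rewrite H1.
    replace (81 * (4 * PI ^ 2 * (247 / 1000 * INR m) * (247 / 1000 * INR m + 1) / 3))
      with ((4 * PI ^ 2) * (27 * (247 / 1000 * INR m) * (247 / 1000 * INR m + 1))) by field.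
    replace ((2 * PI * (INR m + 1)) ^ 2) with ((4 * PI ^ 2) * ((INR m + 1) * (INR m + 1))) by ring.
    apply Rle_ge, Rmult_le_compat_l; [nra|]. nra. }
  assert (HS : 0 < S0) by (unfold S0; nra).
  assert (Hc : cabs (- S0, 0) = S0).
  { unfold cabs, cabs2. cbn [fst snd].
    replace ((- S0) ^ 2 + 0 ^ 2) with (S0 * S0) by ring. apply sqrt_square. lra. }
  rewrite Hc.
  assert (HsS : 0 < sqrt S0) by (apply sqrt_lt_R0; lra).
  split; [left; apply Rinv_0_lt_compat; exact HsS|].
  assert (HM : 2 * PI * (INR m + 1) <= 9 * sqrt S0).
  { rewrite <- (sqrt_pow2 (2 * PI * (INR m + 1))) by nra.
    rewrite <- (sqrt_pow2 9), <- sqrt_mult by lra.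
    apply sqrt_le_1_alt. unfold S0. lra. }
  apply Rmult_le_reg_l with (sqrt S0); [exact HsS|].
  rewrite <- Rmult_assoc, Rinv_r by lra. lra.
Qed.

Lemma cabs2_cscale_le c z : cabs2 (cscale c z) <= (Rabs c * cnorm1 z) ^ 2.
Proof.
  unfold cabs2, cscale, cnorm1; cbn [fst snd].
  rewrite <- (pow2_abs (c * fst z)), <- (pow2_abs (c * snd z)), !Rabs_mult.
  assert (Hcross : 0 <= 2 * Rabs c ^ 2 * (Rabs (fst z) * Rabs (snd z))).
  { pose proof (Rabs_pos c). apply Rmult_le_pos; [nra|].
    apply Rmult_le_pos; apply Rabs_pos. }
  nra.
Qed.

Definition C_entry : R := C_Kbar * 9 ^ 4.

Lemma scaled_Kbar_deriv_le m m1 m2 m3 Kd j x :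
  999 <= INR m ->
  INR m1 = 247 / 1000 * INR m -> INR m2 = 339 / 1000 * INR m -> INR m3 = 414 / 1000 * INR m ->
  IsDerivSeq (Kbar m1 m2 m3) Kd -> (j <= 4)%nat ->
  cabs2 (cscale (kappa Kd ^ j) (Kd j x)) <= C_entry ^ 2 * decay m x ^ 2.
Proof.
  intros Hm Hm1 Hm2 Hm3 HK Hj.
  destruct (kappa_scale_le m m1 m2 m3 Kd HK Hm Hm1) as [Hk0 HkM].
  set (M := 2 * PI * (INR m + 1)) in *.
  assert (HM : 0 <= M) by (unfold M; pose proof PI_RGT_0; pose proof (pos_INR m); nra).
  assert (HKd : cnorm1 (Kd j x) <= C_Kbar * M ^ j * decay m x ^ 3).
  { rewrite (IsDerivSeq_unique _ _ _ HK (Kbar_derivSeq m1 m2 m3)).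
    apply Kbar_deriv_le; auto; lra. }
  pose proof (decay_pos m x). pose proof (decay_le1 m x).
  pose proof (cnorm1_ge0 (Kd j x)) as HKd0.
  assert (HkMj : 0 <= (kappa Kd * M) ^ j <= 9 ^ 4).
  { split; [apply pow_le; nra|].
    eapply Rle_trans; [apply pow_incr; split; [nra | exact HkM]|].
    apply Rle_pow; [lra | exact Hj]. }
  assert (Hd3 : 0 <= decay m x ^ 3 <= decay m x) by (simpl; split; nra).
  eapply Rle_trans; [apply cabs2_cscale_le|].
  rewrite <- Rpow_mult_distr. apply pow_incr. split.
  - apply Rmult_le_pos; [apply Rabs_pos | exact HKd0].
  - rewrite Rabs_right by (apply Rle_ge, pow_le; exact Hk0).
    eapply Rle_trans; [apply Rmult_le_compat_l; [apply pow_le; exact Hk0 | exact HKd]|].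
    replace (kappa Kd ^ j * (C_Kbar * M ^ j * decay m x ^ 3))
      with (C_Kbar * (kappa Kd * M) ^ j * decay m x ^ 3)
      by (rewrite Rpow_mult_distr; ring).
    assert (0 < C_Kbar) by (unfold C_Kbar; lra).
    unfold C_entry. apply Rmult_le_compat; nra.
Qed.

(** * Sums over separated points *)

Definition sumL {A : Type} (g : A -> R) (L : list A) : R :=
  fold_right (fun x acc => g x + acc) 0 L.

Fixpoint sumN (g : nat -> R) (N : nat) : R :=
  match N with O => 0 | S N => sumN g N + g N end.

Definition separated (D : R) (L : list R) : Prop :=
  NoDup L /\ forall a b, In a L -> In b L -> a <> b -> D <= Rabs (a - b).

Section SumL.
Context {A : Type}.

Lemma sumL_perm (g : A -> R) (L L' : list A) : Permutation L L' -> sumL g L = sumL g L'.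
Proof. induction 1; simpl; lra. Qed.

Lemma sumL_ext (g g' : A -> R) (L : list A) : (forall x, In x L -> g x = g' x) -> sumL g L = sumL g' L.
Proof. induction L as [|a L IH]; simpl; intros H; [|rewrite H, IH]; auto. Qed.

Lemma sumL_le (g g' : A -> R) (L : list A) : (forall x, In x L -> g x <= g' x) -> sumL g L <= sumL g' L.
Proof.
  induction L as [|a L IH]; simpl; intros H; [lra|].
  pose proof (H a (or_introl eq_refl)). pose proof (IH (fun x Hx => H x (or_intror Hx))). lra.
Qed.

Lemma sumL_app (g : A -> R) (L1 L2 : list A) : sumL g (L1 ++ L2) = sumL g L1 + sumL g L2.
Proof. induction L1 as [|a L1 IH]; simpl; [|rewrite IH]; ring. Qed.

Lemma sumL_map {B : Type} g (h : B -> A) L : sumL g (map h L) = sumL (fun x => g (h x)) L.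
Proof. induction L as [|a L IH]; simpl; [|rewrite IH]; auto. Qed.

Lemma sumL_scal c (g : A -> R) (L : list A) : sumL (fun x => c * g x) L = c * sumL g L.
Proof. induction L as [|a L IH]; simpl; [|rewrite IH]; ring. Qed.

Lemma sumL_filter (g : A -> R) p (L : list A) :
  sumL g L = sumL g (filter p L) + sumL g (filter (fun x => negb (p x)) L).
Proof. induction L as [|a L IH]; simpl; [lra|]. destruct (p a); simpl; rewrite IH; lra. Qed.

End SumL.

Lemma sumN_le g g' N : (forall k, g k <= g' k) -> sumN g N <= sumN g' N.
Proof. intros H; induction N as [|N IH]; simpl; [lra|]. pose proof (H N). lra. Qed.

Lemma sumN_shift g N : sumN g (S N) = g O + sumN (fun k => g (S k)) N.
Proof. induction N as [|N IH]; simpl in *; [|rewrite IH]; lra. Qed.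

Lemma separated_incl D L L' :
  separated D L -> NoDup L' -> incl L' L -> separated D L'.
Proof. intros [_ H] Hnd Hincl. split; auto. Qed.

Lemma list_min_exists (L : list R) : L <> nil -> exists x0, In x0 L /\ forall y, In y L -> x0 <= y.
Proof.
  induction L as [|a [|b l] IH]; intros H; [congruence| |].
  - exists a. split; [left; auto|]. intros y [<-|[]]; lra.
  - destruct IH as [x0 [Hx Hm]]; [congruence|].
    destruct (Rle_dec a x0) as [Ha|Ha].
    + exists a. split; [left; auto|]. intros y [<-|Hy]; [lra|]. pose proof (Hm y Hy). lra.
    + exists x0. split; [right; auto|]. intros y [<-|Hy]; [lra | auto].
Qed.

(* Comparison with the extremal configuration: sorted increasingly, the [k]-th
   point of a [D]-separated list in [[s, +oo)] lies beyond [s + k D]. *)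
Lemma sumL_separated_le (h : R -> R) D : 0 < D ->
  (forall u v, 0 <= u <= v -> h v <= h u) ->
  forall N L s, length L = N -> 0 <= s -> separated D L -> (forall x, In x L -> s <= x) ->
  sumL h L <= sumN (fun k => h (s + INR k * D)) N.
Proof.
  intros HD Hh N. induction N as [|N IH]; intros L s Hl Hs [Hnd Hsep] Hge.
  - destruct L; [simpl; lra | discriminate].
  - assert (Hne : L <> nil) by (intro; subst; discriminate).
    destruct (list_min_exists L Hne) as [x0 [Hx0 Hmin]].
    destruct (in_split x0 L Hx0) as [l1 [l2 E]].
    assert (P : Permutation L (x0 :: l1 ++ l2))
      by (rewrite E; apply Permutation_sym, Permutation_middle).
    assert (Hin : incl (l1 ++ l2) L)
      by (intros y Hy; apply (Permutation_in _ (Permutation_sym P)); right; exact Hy).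
    pose proof (Permutation_NoDup P Hnd) as Hnd'. apply NoDup_cons_iff in Hnd' as [Hx0' Hnd'].
    rewrite (sumL_perm h _ _ P), sumN_shift. simpl sumL.
    assert (Hhead : h x0 <= h (s + INR 0 * D))
      by (apply Hh; simpl; rewrite Rmult_0_l, Rplus_0_r; split; [exact Hs | apply Hge, Hx0]).
    enough (sumL h (l1 ++ l2) <= sumN (fun k => h (s + INR (S k) * D)) N) by lra.
    replace (fun k => h (s + INR (S k) * D)) with (fun k => h (s + D + INR k * D))
      by (apply functional_extensionality; intro k; rewrite S_INR; f_equal; ring).
    apply IH.
    + apply Permutation_length in P. simpl in P. lia.
    + lra.
    + apply (separated_incl D L); [split|..]; auto.
    + intros y Hy. assert (Hyx : y <> x0) by (intro; subst; contradiction).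
      pose proof (Hmin y (Hin y Hy)). pose proof (Hge x0 Hx0).
      pose proof (Hsep y x0 (Hin y Hy) Hx0 Hyx).
      unfold Rabs in *. destruct (Rcase_abs (y - x0)); lra.
Qed.

Lemma sumN_inv_sq_le N : sumN (fun k => / (1 + INR k) ^ 2) N <= 2.
Proof.
  (* Telescoping: [1 / (b+1)^2 <= 1 / b - 1 / (b+1)]. *)
  assert (Htel : forall n, sumN (fun k => / (1 + INR k) ^ 2) (S n) + / (INR n + 1) <= 2).
  { induction n as [|n IH].
    - simpl. replace ((1 + 0) * ((1 + 0) * 1)) with 1 by ring.
      replace (0 + 1) with 1 by ring. rewrite Rinv_1; lra.
    - change (sumN (fun k => / (1 + INR k) ^ 2) (S (S n))) with
        (sumN (fun k => / (1 + INR k) ^ 2) (S n) + / (1 + INR (S n)) ^ 2).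
      rewrite S_INR. set (b := INR n + 1) in *.
      assert (1 <= b) by (unfold b; pose proof (pos_INR n); lra).
      assert (/ b - (/ (b + 1) ^ 2 + / (b + 1)) = / (b * (b + 1) ^ 2)) by (field; lra).
      assert (0 < / (b * (b + 1) ^ 2))
        by (apply Rinv_0_lt_compat, Rmult_lt_0_compat; [|apply pow_lt]; lra).
      replace (1 + b) with (b + 1) by ring. lra. }
  destruct N as [|N]; [simpl; lra|].
  pose proof (Htel N). assert (0 < / (INR N + 1)) by (apply Rinv_0_lt_compat; pose proof (pos_INR N); lra).
  lra.
Qed.

Lemma sumL_separated_decay_le (m D : R) U : 0 < m -> 0 < D -> 1 <= m * D -> separated D U ->
  sumL (fun u => / (1 + m * Rabs u) ^ 2) U <= 4.
Proof.
  intros Hm HD HmD HU.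
  set (h := fun u => / (1 + m * u) ^ 2).
  assert (Hh : forall u v, 0 <= u <= v -> h v <= h u).
  { intros u v [Hu Huv]. unfold h. apply Rinv_le_contravar; [apply pow_lt; nra | apply pow_incr; nra]. }
  assert (Hhalf : forall V, separated D V -> (forall x, In x V -> 0 <= x) -> sumL h V <= 2).
  { intros V HV Hpos. eapply Rle_trans; [apply (sumL_separated_le h D HD Hh (length V) V 0); auto; lra|].
    eapply Rle_trans; [|apply (sumN_inv_sq_le (length V))]. apply sumN_le. intro k. unfold h.
    pose proof (pos_INR k). apply Rinv_le_contravar; [apply pow_lt; lra | apply pow_incr; nra]. }
  set (p := fun u => if Rle_dec 0 u then true else false).
  assert (Hp : forall x, p x = true <-> 0 <= x) by (intro x; unfold p; destruct Rle_dec; split; easy).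
  destruct HU as [Hnd Hsep].
  rewrite (sumL_filter _ p).
  assert (Hnn : sumL (fun u => / (1 + m * Rabs u) ^ 2) (filter p U) <= 2).
  { rewrite (sumL_ext _ h).
    - apply Hhalf.
      + apply (separated_incl D U); [split; auto | apply NoDup_filter; auto |].
        intros x Hx; apply filter_In in Hx; tauto.
      + intros x Hx. apply filter_In in Hx as [_ Hx]. apply Hp; exact Hx.
    - intros x Hx. apply filter_In in Hx as [_ Hx]. apply Hp in Hx.
      unfold h. rewrite Rabs_right; lra. }
  assert (Hneg : sumL (fun u => / (1 + m * Rabs u) ^ 2) (filter (fun x => negb (p x)) U) <= 2).
  { set (Ln := filter (fun x => negb (p x)) U).
    assert (Hlt : forall x, In x Ln -> x < 0).
    { intros x Hx. apply filter_In in Hx as [_ Hx].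
      destruct (Rlt_le_dec x 0) as [|Hx0]; [auto|]. apply Hp in Hx0. rewrite Hx0 in Hx. discriminate. }
    rewrite (sumL_ext _ (fun x => h (- x))) by (intros x Hx; unfold h; rewrite Rabs_left; auto).
    rewrite <- (sumL_map h Ropp). apply Hhalf.
    - split.
      + apply FinFun.Injective_map_NoDup; [intros a b E; lra | apply NoDup_filter; auto].
      + intros a b Ha Hb Hab. apply in_map_iff in Ha as [a' [<- Ha]], Hb as [b' [<- Hb]].
        replace (- a' - - b') with (- (a' - b')) by ring. rewrite Rabs_Ropp.
        apply filter_In in Ha, Hb. apply Hsep; try tauto. intro; subst; apply Hab; auto.
    - intros x Hx. apply in_map_iff in Hx as [x' [<- Hx']]. pose proof (Hlt x' Hx'). lra. }
  lra.
Qed.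

(** * Wrap-around distances *)

Lemma sin_ge_third a : 0 <= a <= 2 -> a / 3 <= sin a.
Proof.
  intros Ha. pose proof PI_4. pose proof PI2_3_2.
  destruct (sin_bound a 0 ltac:(lra) ltac:(lra)) as [Hsin _].
  eapply Rle_trans; [|exact Hsin]. unfold sin_approx, sin_term. simpl. nra.
Qed.

Lemma Rabs_le_Rabs_sin_PI t : Rabs t <= 1 / 2 -> Rabs t <= Rabs (sin (PI * t)).
Proof.
  intros Ht. pose proof PI_4. pose proof PI2_3_2.
  assert (Hpos : forall u, 0 <= u <= 1 / 2 -> u <= sin (PI * u)).
  { intros u Hu. pose proof (sin_ge_third (PI * u) ltac:(split; nra)). nra. }
  destruct (Rle_dec 0 t) as [Ht0|Ht0].
  - rewrite Rabs_right in * by lra. pose proof (Hpos t ltac:(lra)). rewrite Rabs_right; lra.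
  - rewrite Rabs_left in * by lra. pose proof (Hpos (- t) ltac:(lra)).
    replace (PI * t) with (- (PI * - t)) by ring. rewrite sin_neg, Rabs_Ropp.
    rewrite Rabs_right; lra.
Qed.

(* The representative of [fj - f] modulo 1 in [[-1/2, 1/2]]. *)
Definition wrap_offset (f fj : R) : R :=
  let d := fj - f in
  if Rle_dec (1 / 2) d then d - 1 else if Rle_dec d (- 1 / 2) then d + 1 else d.

Lemma Rabs_wrap_offset_le f fj : 0 <= f <= 1 -> 0 <= fj < 1 -> Rabs (wrap_offset f fj) <= 1 / 2.
Proof.
  intros. unfold wrap_offset.
  destruct (Rle_dec _ _); [|destruct (Rle_dec _ _)]; apply Rabs_le; lra.
Qed.

Lemma Rabs_sin_PI_wrap_offset f fj :
  Rabs (sin (PI * (f - fj))) = Rabs (sin (PI * wrap_offset f fj)).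
Proof.
  assert (Hshift : forall y, Rabs (sin (y + PI)) = Rabs (sin y) /\ Rabs (sin (y - PI)) = Rabs (sin y)).
  { intro y. rewrite sin_plus, sin_minus, sin_PI, cos_PI.
    split; rewrite <- Rabs_Ropp; f_equal; ring. }
  replace (PI * (f - fj)) with (- (PI * (fj - f))) by ring. rewrite sin_neg, Rabs_Ropp.
  unfold wrap_offset. destruct (Rle_dec _ _); [|destruct (Rle_dec _ _)]; auto.
  - replace (PI * (fj - f - 1)) with (PI * (fj - f) - PI) by ring. symmetry; apply Hshift.
  - replace (PI * (fj - f + 1)) with (PI * (fj - f) + PI) by ring. symmetry; apply Hshift.
Qed.

Lemma wdist_le_wrap_offset f a b : 0 <= f <= 1 -> 0 <= a < 1 -> 0 <= b < 1 ->
  wdist a b <= Rabs (wrap_offset f a - wrap_offset f b).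
Proof.
  intros Hf Ha Hb. unfold wdist, wrap_offset.
  pose proof (Rmin_l (Rabs (a - b)) (1 - Rabs (a - b))).
  pose proof (Rmin_r (Rabs (a - b)) (1 - Rabs (a - b))).
  set (r := Rmin (Rabs (a - b)) (1 - Rabs (a - b))) in *.
  destruct (Rle_dec (1 / 2) (a - f)); [|destruct (Rle_dec (a - f) (- 1 / 2))];
  (destruct (Rle_dec (1 / 2) (b - f)); [|destruct (Rle_dec (b - f) (- 1 / 2))]);
  unfold Rabs in *; repeat destruct Rcase_abs; lra.
Qed.

Lemma separated_of_nth D U : 0 < D ->
  (forall i j, (i < length U)%nat -> (j < length U)%nat -> i <> j ->
     D <= Rabs (nth i U 0 - nth j U 0)) ->
  separated D U.
Proof.
  intros HD H. split.
  - apply (NoDup_nth U 0). intros i j Hi Hj E. destruct (Nat.eq_dec i j) as [|Hij]; auto.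
    pose proof (H i j Hi Hj Hij) as Hsep. rewrite E, Rminus_diag, Rabs_R0 in Hsep. lra.
  - intros a b Ha Hb Hab.
    apply (In_nth U a 0) in Ha as [i [Hi <-]]. apply (In_nth U b 0) in Hb as [j [Hj <-]].
    apply H; auto. intro; subst; auto.
Qed.

Lemma sum_decay_sq_le m D f T : 0 < INR m -> 0 < D -> 1 <= INR m * D -> 0 <= f <= 1 ->
  (forall x, In x T -> 0 <= x < 1) ->
  (forall i j, (i < length T)%nat -> (j < length T)%nat -> i <> j ->
     wdist (nth i T 0) (nth j T 0) >= D) ->
  sumL (fun x => decay m (f - x) ^ 2) T <= 4.
Proof.
  intros Hm HD HmD Hf HT Hsep.
  eapply Rle_trans; [|apply (sumL_separated_decay_le (INR m) D (map (wrap_offset f) T)); auto].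
  - rewrite sumL_map. apply sumL_le. intros x Hx.
    pose proof (Rabs_wrap_offset_le f x Hf (HT x Hx)) as Hoff.
    pose proof (Rabs_le_Rabs_sin_PI _ Hoff). pose proof (Rabs_pos (wrap_offset f x)).
    unfold decay. rewrite Rabs_sin_PI_wrap_offset, pow_inv.
    apply Rinv_le_contravar; [apply pow_lt; nra | apply pow_incr; nra].
  - apply separated_of_nth; auto. intros i j Hi Hj Hij. rewrite length_map in Hi, Hj.
    rewrite !(nth_indep _ 0 (wrap_offset f 0)), !map_nth by (rewrite length_map; auto).
    pose proof (Hsep i j Hi Hj Hij).
    pose proof (wdist_le_wrap_offset f _ _ Hf (HT _ (nth_In T 0 Hi)) (HT _ (nth_In T 0 Hj))).
    lra.
Qed.

(** * The bound on [vbar] *)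

Lemma cnorm2_vbar_le Kd l T f B (w : R -> R) : 0 <= B ->
  (forall j x, j = l \/ j = S l -> In x T ->
     cabs2 (cscale (kappa Kd ^ j) (Kd j (f - x))) <= B * w x) ->
  sumL w T <= 4 ->
  cnorm2 (vbar Kd l T f) <= sqrt (8 * B).
Proof.
  intros HB Hentry Hw.
  unfold cnorm2. fold (sumL cabs2 (vbar Kd l T f)). unfold vbar, vbar1, vbar2.
  rewrite sumL_app, !sumL_map.
  assert (Hblock : forall j, j = l \/ j = S l ->
            sumL (fun x => cabs2 (cscale (kappa Kd ^ j) (Kd j (f - x)))) T <= 4 * B).
  { intros j Hj. eapply Rle_trans; [apply sumL_le; intros x Hx; apply Hentry; eauto|].
    rewrite sumL_scal. nra. }
  pose proof (Hblock l (or_introl eq_refl)).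
  pose proof (Hblock (S l) (or_intror eq_refl)).
  rewrite Rmult_comm, tech_pow_Rmult. apply sqrt_le_1_alt. lra.
Qed.

Lemma mOf_bounds n : (2000 <= n)%nat -> 999 <= INR (mOf n) /\ INR n <= 2 * INR (mOf n) + 3.
Proof.
  intros Hn.
  enough (H : (999 <= mOf n)%nat /\ (n <= 2 * mOf n + 3)%nat).
  { destruct H as [H1 H2]. apply le_INR in H1, H2.
    rewrite plus_INR, mult_INR in H2. simpl in H1, H2. lra. }
  unfold mOf.
  pose proof (Nat.div_mod n 2 ltac:(lia)). pose proof (Nat.mod_upper_bound n 2 ltac:(lia)).
  pose proof (Nat.div_mod (n - 1) 2 ltac:(lia)). pose proof (Nat.mod_upper_bound (n - 1) 2 ltac:(lia)).
  destruct (Nat.odd n); lia.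
Qed.

Theorem lemmaG3 :
  exists Cv : R,
  forall (n m1 m2 m3 : nat) (T : list R) (Kd : nat -> R -> cplx),
    (2000 <= n)%nat ->
    INR m1 = (247 / 1000) * INR (mOf n) ->
    INR m2 = (339 / 1000) * INR (mOf n) ->
    INR m3 = (414 / 1000) * INR (mOf n) ->
    (forall x, In x T -> 0 <= x < 1) ->
    (forall i j : nat, (i < length T)%nat -> (j < length T)%nat -> i <> j ->
       wdist (nth i T 0) (nth j T 0) >= (252 / 100) / (INR n - 1)) ->
    IsDerivSeq (Kbar m1 m2 m3) Kd ->
    forall (l : nat) (f : R), (l <= 3)%nat -> 0 <= f <= 1 ->
      cnorm2 (vbar Kd l T f) <= Cv.
Proof.
  exists (sqrt (8 * C_entry ^ 2)).
  intros n m1 m2 m3 T Kd Hn H1 H2 H3 HT Hsep HK l f Hl Hf.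
  destruct (mOf_bounds n Hn) as [Hm Hnm].
  assert (Hn' : 2000 <= INR n) by (apply le_INR in Hn; simpl in Hn; lra).
  apply (cnorm2_vbar_le Kd l T f _ (fun x => decay (mOf n) (f - x) ^ 2)).
  - apply pow_le. unfold C_entry, C_Kbar. lra.
  - intros j x Hj _. apply (scaled_Kbar_deriv_le _ m1 m2 m3); auto. lia.
  - apply (sum_decay_sq_le _ (252 / 100 / (INR n - 1))); auto; try lra.
    + apply Rdiv_lt_0_compat; lra.
    + apply Rmult_le_reg_r with (INR n - 1); [lra|].
      field_simplify; lra.
Qed.
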